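(* Let $\pi_1$ be a positive probability density on $\mathbb{R}$ with $\log\pi_1\in C^1(\mathbb{R})$ and suppose that for some $q\in[0,1)$, $\left|\frac{d}{dx_1}\log\pi_1(x_1)\right|=\Theta(|x_1|^q)$ as $|x_1|\to\infty$. Let $X_1\sim\pi_1$ and fix $k\ge0$. Then there exists $\gamma\in(0,\infty)$ such that $\mathbb{P}(|X_1|>k+h)\le\Theta\big(e^{-\gamma h^{1+q}-q\log h}\big)$ as $h\to\infty$, i.e. $\limsup_{h\to\infty}\mathbb{P}(|X_1|>k+h)\,e^{\gamma h^{1+q}+q\log h}<\infty$.
   Context: $F=\Theta(G)$ as $|x_1|\to\infty$ means $\liminf F/G>0$ and $\limsup F/G<\infty$. *)

From Stdlib Require Import Reals.
From Coquelicot Require Import Coquelicot.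
Open Scope R_scope.

Definition is_prob_density (pi : R -> R) : Prop :=
  is_RInt_gen pi (Rbar_locally m_infty) (Rbar_locally p_infty) 1.

(* P(|X| > t) for X ~ pi, t >= 0: the two tail integrals. *)
Definition abs_tail_prob (pi : R -> R) (t : R) : R :=
  RInt_gen pi (at_point t) (Rbar_locally p_infty)
  + RInt_gen pi (Rbar_locally m_infty) (at_point (- t)).

From Stdlib Require Import Reals Lra.
From Coquelicot Require Import Coquelicot.
Open Scope R_scope.

(* Write L = log pi.  Beyond some M, L' is continuous and nonzero, hence of constant
   sign; it cannot be positive, since pi would then be nondecreasing on a half-line
   and not integrable.  So L' <= -c s^q on [s, oo) for s > M.  Integrating this over
   [M + 1, t/2] and [t/2, t] gives L(t) <= L(M + 1) - a t^(1+q) with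
   a = c 2^-(1+q), and beyond t the density decays at least like exp(-c (x - t)),
   so the right tail at t is O(exp(-a t^(1+q))).  The left tail is the right tail
   of x |-> pi(-x).  With gamma = a/2 the remaining factor
   exp(-gamma h^(1+q) + q log h) <= h exp(-gamma h) stays bounded. *)

Local Notation ex_derive_continuous_R :=
  (ex_derive_continuous (K := R_AbsRing) (V := R_NormedModule)).

Lemma exp_le_compat x y : x <= y -> exp x <= exp y.
Proof. intros [Hlt | ->]; [left; apply exp_increasing, Hlt | right; reflexivity]. Qed.

Lemma MVT_Derive (L : R -> R) (Hd : forall x, ex_derive L x) a b : a <= b ->
  exists x, a <= x <= b /\ L b - L a = Derive L x * (b - a).
Proof.
  intros Hab. destruct (MVT_gen L a b (Derive L)) as [x [Hx E]].
  - intros; apply Derive_correct, Hd.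
  - intros; apply continuity_pt_filterlim, ex_derive_continuous_R, Hd.
  - rewrite Rmin_left, Rmax_right in Hx by lra. now exists x.
Qed.

Lemma continuous_pos_stable (g : R -> R) (M : R) :
  (forall x, continuous g x) -> (forall x, M < x -> g x <> 0) ->
  forall x y, M < x -> M < y -> 0 < g x -> 0 < g y.
Proof.
  intros Hc Hnz x y Hx Hy Hgx.
  destruct (Rlt_or_le 0 (g y)) as [Hgy | Hgy]; [exact Hgy | exfalso].
  destruct (IVT_gen g x y 0) as [z [Hz Hgz]].
  - intros z. apply continuity_pt_filterlim, Hc.
  - split; [apply Rle_trans with (g y); [apply Rmin_r | lra] |
            apply Rle_trans with (g x); [lra | apply Rmax_l]].
  - apply (Hnz z); [| exact Hgz]. pose proof (Rmin_glb_lt x y M Hx Hy). lra.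
Qed.

Lemma continuous_of_ex_derive_ln (f : R -> R) :
  (forall x, 0 < f x) -> (forall x, ex_derive (fun y => ln (f y)) x) ->
  forall x, continuous f x.
Proof.
  intros Hpos Hd x. apply continuous_ext with (fun y => exp (ln (f y))).
  - intros y. apply exp_ln, Hpos.
  - apply continuous_comp with (g := exp).
    + apply ex_derive_continuous_R, Hd.
    + apply ex_derive_continuous_R. auto_derive. auto.
Qed.

Section ContinuousIntegrand.

Variable f : R -> R.
Hypothesis f_cont : forall x, continuous f x.

Lemma ex_RInt_cont a b : ex_RInt f a b.
Proof. apply (ex_RInt_continuous (V := R_CompleteNormedModule)); intros; apply f_cont. Qed.

Lemma RInt_Chasles_cont a b c : RInt f a b + RInt f b c = RInt f a c.
Proof. apply (RInt_Chasles (V := R_CompleteNormedModule)); apply ex_RInt_cont. Qed.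

Lemma is_RInt_gen_cont_filterlim Fa Fb l : Filter Fa -> Filter Fb ->
  is_RInt_gen f Fa Fb l <->
  filterlim (fun ab => RInt f (fst ab) (snd ab)) (filter_prod Fa Fb) (locally l).
Proof.
  intros FFa FFb; split; intros H P HP; specialize (H P HP);
    unfold filtermapi, filtermap in *; revert H; apply filter_imp.
  - intros [a b] [y [Hy Py]]. simpl in *. now rewrite (is_RInt_unique _ _ _ _ Hy).
  - intros [a b] Py. exists (RInt f a b). split; [| exact Py].
    apply (RInt_correct (V := R_CompleteNormedModule)), ex_RInt_cont.
Qed.

Lemma ex_RInt_gen_of_cauchy Fa Fb : ProperFilter Fa -> ProperFilter Fb ->
  (forall eps : posreal, exists P, filter_prod Fa Fb P /\
     forall u v, P u -> P v -> Rabs (RInt f (fst v) (snd v) - RInt f (fst u) (snd u)) < eps) ->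
  ex_RInt_gen f Fa Fb.
Proof.
  intros PFa PFb Hcauchy.
  destruct (proj1 (filterlim_locally_cauchy (U := R_CompleteSpace) (F := filter_prod Fa Fb)
                     (fun ab => RInt f (fst ab) (snd ab))) Hcauchy) as [l Hl].
  exists l. apply is_RInt_gen_cont_filterlim; [apply PFa | apply PFb | exact Hl].
Qed.

Lemma RInt_gen_le_cont Fa Fb U : ProperFilter Fa -> ProperFilter Fb ->
  ex_RInt_gen f Fa Fb ->
  filter_prod Fa Fb (fun ab => RInt f (fst ab) (snd ab) <= U) ->
  RInt_gen f Fa Fb <= U.
Proof.
  intros PFa PFb [l Hl] HU.
  rewrite (is_RInt_gen_unique _ _ Hl).
  apply is_RInt_gen_cont_filterlim in Hl; try apply PFa; try apply PFb.
  exact (filterlim_le (F := filter_prod Fa Fb) _ (fun _ => U) l U HU Hl (filterlim_const U)).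
Qed.

Lemma RInt_comp_opp_cont a b :
  RInt (fun y => f (- y)) a b = RInt f (- b) (- a).
Proof.
  apply is_RInt_unique.
  apply (is_RInt_ext (fun y => opp (opp (f (- y))))); [intros; apply opp_opp |].
  rewrite <- (opp_opp (RInt f (- b) (- a))).
  apply (is_RInt_opp (V := R_NormedModule)), (is_RInt_comp_opp (V := R_NormedModule)),
    (is_RInt_swap (V := R_NormedModule)).
  apply (RInt_correct (V := R_CompleteNormedModule)), ex_RInt_cont.
Qed.

Lemma RInt_le_exp_decay (E c t b : R) :
  0 <= E -> 0 < c -> t <= b -> (forall x, t <= x -> f x <= E * exp (- c * (x - t))) ->
  RInt f t b <= E / c.
Proof.
  intros HE Hc0 Htb Hdom.
  set (F := fun x => - E / c * exp (- c * (x - t))).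
  assert (HF : is_RInt (fun x => E * exp (- c * (x - t))) t b (F b - F t)).
  { apply (is_RInt_derive (V := R_CompleteNormedModule) F).
    - intros x _. unfold F. auto_derive; [auto |].
      replace (x + - t) with (x - t) by ring. field. lra.
    - intros x _. apply ex_derive_continuous_R. auto_derive. auto. }
  apply Rle_trans with (RInt (fun x => E * exp (- c * (x - t))) t b).
  - apply RInt_le; [exact Htb | apply ex_RInt_cont | eexists; exact HF |].
    intros x Hx. apply Hdom. lra.
  - rewrite (is_RInt_unique _ _ _ _ HF). unfold F.
    replace (t - t) with 0 by ring. rewrite Rmult_0_r, exp_0.
    assert (0 <= E / c * exp (- c * (b - t))).
    { apply Rmult_le_pos; [apply Rdiv_le_0_compat; lra | left; apply exp_pos]. }
    replace (- E / c * exp (- c * (b - t)) - - E / c * 1)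
      with (E / c - E / c * exp (- c * (b - t))) by (field; lra).
    lra.
Qed.

Section TotalIntegral.

Variable l : R.
Hypothesis f_total : is_RInt_gen f (Rbar_locally m_infty) (Rbar_locally p_infty) l.

Lemma RInt_near_total eps : 0 < eps ->
  exists A B, forall a b, a < A -> B < b -> Rabs (RInt f a b - l) < eps.
Proof.
  intros Heps.
  pose proof f_total as Hlim.
  apply is_RInt_gen_cont_filterlim in Hlim; try apply Rbar_locally_filter.
  destruct (Hlim _ (locally_ball l (mkposreal eps Heps))) as [P Q [A HA] [B HB] HPQ].
  exists A, B. intros a b Ha Hb. exact (HPQ a b (HA a Ha) (HB b Hb)).
Qed.

Lemma RInt_le_total (f_nonneg : forall x, 0 <= f x) a b : a <= b -> RInt f a b <= l.
Proof.
  intros Hab. apply le_epsilon. intros eps Heps.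
  destruct (RInt_near_total eps Heps) as [A [B Hnear]].
  set (a' := Rmin a (A - 1)). set (b' := Rmax b (B + 1)).
  assert (Hout : Rabs (RInt f a' b' - l) < eps).
  { pose proof (Rmin_r a (A - 1)). pose proof (Rmax_r b (B + 1)).
    apply Hnear; unfold a', b'; lra. }
  assert (Hleft : 0 <= RInt f a' a)
    by (apply RInt_ge_0; [apply Rmin_l | apply ex_RInt_cont | intros; apply f_nonneg]).
  assert (Hright : 0 <= RInt f b b')
    by (apply RInt_ge_0; [apply Rmax_l | apply ex_RInt_cont | intros; apply f_nonneg]).
  rewrite <- (RInt_Chasles_cont a' a b'), <- (RInt_Chasles_cont a b b') in Hout.
  apply Rabs_def2 in Hout. lra.
Qed.

Lemma RInt_small_right eps : 0 < eps ->
  exists N, forall u v, N < u -> N < v -> Rabs (RInt f u v) < eps.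
Proof.
  intros Heps. destruct (RInt_near_total (eps / 2)) as [A [B Hnear]]; [lra |].
  exists B. intros u v Hu Hv.
  pose proof (Hnear (A - 1) u ltac:(lra) Hu) as Hu'.
  pose proof (Hnear (A - 1) v ltac:(lra) Hv) as Hv'.
  rewrite <- (RInt_Chasles_cont (A - 1) u v) in Hv'.
  apply Rabs_def2 in Hu'. apply Rabs_def2 in Hv'. apply Rabs_def1; lra.
Qed.

Lemma RInt_small_left eps : 0 < eps ->
  exists N, forall u v, u < N -> v < N -> Rabs (RInt f u v) < eps.
Proof.
  intros Heps. destruct (RInt_near_total (eps / 2)) as [A [B Hnear]]; [lra |].
  exists A. intros u v Hu Hv.
  pose proof (Hnear u (B + 1) Hu ltac:(lra)) as Hu'.
  pose proof (Hnear v (B + 1) Hv ltac:(lra)) as Hv'.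
  rewrite <- (RInt_Chasles_cont u v (B + 1)) in Hu'.
  apply Rabs_def2 in Hu'. apply Rabs_def2 in Hv'. apply Rabs_def1; lra.
Qed.

Lemma RInt_gen_right_le t U : (forall b, t <= b -> RInt f t b <= U) ->
  RInt_gen f (at_point t) (Rbar_locally p_infty) <= U.
Proof.
  intros HU. apply RInt_gen_le_cont; try apply at_point_filter; try apply Rbar_locally_filter.
  - apply ex_RInt_gen_of_cauchy; try apply at_point_filter; try apply Rbar_locally_filter.
    intros eps. destruct (RInt_small_right eps (cond_pos eps)) as [N HN].
    exists (fun ab => fst ab = t /\ N < snd ab). split.
    + apply Filter_prod with (fun a => a = t) (fun b => N < b);
        [reflexivity | now exists N | now split].
    + intros [u1 u2] [v1 v2] [Hu1 Hu2] [Hv1 Hv2]. simpl in *. subst.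
      pose proof (RInt_Chasles_cont t u2 v2).
      replace (RInt f t v2 - RInt f t u2) with (RInt f u2 v2) by lra. auto.
  - apply Filter_prod with (fun a => a = t) (fun b => t <= b);
      [reflexivity | exists t; intros; lra |].
    intros a b -> Hb. now apply HU.
Qed.

Lemma RInt_gen_left_le t U : (forall a, a <= t -> RInt f a t <= U) ->
  RInt_gen f (Rbar_locally m_infty) (at_point t) <= U.
Proof.
  intros HU. apply RInt_gen_le_cont; try apply at_point_filter; try apply Rbar_locally_filter.
  - apply ex_RInt_gen_of_cauchy; try apply at_point_filter; try apply Rbar_locally_filter.
    intros eps. destruct (RInt_small_left eps (cond_pos eps)) as [N HN].
    exists (fun ab => fst ab < N /\ snd ab = t). split.
    + apply Filter_prod with (fun a => a < N) (fun b => b = t);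
        [now exists N | reflexivity | now split].
    + intros [u1 u2] [v1 v2] [Hu1 Hu2] [Hv1 Hv2]. simpl in *. subst.
      pose proof (RInt_Chasles_cont u1 v1 t).
      replace (RInt f v1 t - RInt f u1 t) with (- RInt f u1 v1) by lra.
      rewrite Rabs_Ropp. auto.
  - apply Filter_prod with (fun a => a <= t) (fun b => b = t);
      [exists t; intros; lra | reflexivity |].
    intros a b Ha ->. now apply HU.
Qed.

End TotalIntegral.

End ContinuousIntegrand.




Section LogDerivativeDecay.

Variable f : R -> R.
Hypothesis f_pos : forall x, 0 < f x.
Hypothesis lnf_derivable : forall x, ex_derive (fun y => ln (f y)) x.
Hypothesis lnf_Derive_cont : forall x, continuous (Derive (fun y => ln (f y))) x.
Variable B : R.
Hypothesis f_RInt_bounded : forall a b, a <= b -> RInt f a b <= B.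
Variables q c M : R.
Hypothesis q_ge0 : 0 <= q.
Hypothesis c_gt0 : 0 < c.
Hypothesis M_ge1 : 1 <= M.
Hypothesis Derive_lnf_ge :
  forall x, M < x -> c * Rpower x q <= Rabs (Derive (fun y => ln (f y)) x).

Local Notation lnf := (fun y => ln (f y)).

Lemma f_not_nondecreasing x : ~ (forall y, x <= y -> f x <= f y).
Proof.
  intros Hmono.
  set (b := x + (Rabs B + 1) / f x).
  assert (Hfx := f_pos x).
  assert (Hxb : x <= b).
  { assert (0 < (Rabs B + 1) / f x).
    { apply Rdiv_lt_0_compat; [pose proof (Rabs_pos B) |]; lra. }
    unfold b. lra. }
  assert (Hconst : RInt (fun _ => f x) x b <= RInt f x b).
  { apply RInt_le; [exact Hxb | apply ex_RInt_const |
                     apply ex_RInt_cont, continuous_of_ex_derive_ln; auto |].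
    intros y Hy. apply Hmono. lra. }
  rewrite RInt_const in Hconst. change (scal (b - x) (f x)) with ((b - x) * f x) in Hconst.
  replace ((b - x) * f x) with (Rabs B + 1) in Hconst by (unfold b; field; lra).
  pose proof (f_RInt_bounded x b Hxb). pose proof (Rle_abs B). lra.
Qed.

Lemma Derive_lnf_neq0 x : M < x -> Derive lnf x <> 0.
Proof.
  intros Hx E. pose proof (Derive_lnf_ge x Hx) as Hge. rewrite E, Rabs_R0 in Hge.
  assert (0 < Rpower x q) by apply exp_pos.
  assert (0 < c * Rpower x q) by (apply Rmult_lt_0_compat; auto). lra.
Qed.

Lemma Derive_lnf_neg x : M < x -> Derive lnf x < 0.
Proof.
  intros Hx. destruct (Rtotal_order (Derive lnf x) 0) as [Hneg | [Hzero | Hpos]].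
  - exact Hneg.
  - exfalso. exact (Derive_lnf_neq0 x Hx Hzero).
  - exfalso. apply (f_not_nondecreasing x). intros y Hy.
    destruct (MVT_Derive lnf lnf_derivable x y Hy) as [z [Hz E]].
    assert (0 < Derive lnf z)
      by (apply (continuous_pos_stable _ M lnf_Derive_cont Derive_lnf_neq0 x); lra).
    assert (ln (f x) <= ln (f y)) by nra.
    apply Rnot_lt_le. intros Hlt. apply ln_increasing in Hlt; [lra | apply f_pos].
Qed.

Lemma Derive_lnf_le s x : M < s -> s <= x -> Derive lnf x <= - c * Rpower s q.
Proof.
  intros Hs Hsx. pose proof (Derive_lnf_ge x ltac:(lra)) as Hge.
  rewrite Rabs_left in Hge by (apply Derive_lnf_neg; lra).
  assert (Rpower s q <= Rpower x q) by (apply Rle_Rpower_l; lra). nra.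
Qed.

Lemma lnf_decrease s t : M < s -> s <= t -> ln (f t) <= ln (f s) - c * Rpower s q * (t - s).
Proof.
  intros Hs Hst. destruct (MVT_Derive lnf lnf_derivable s t Hst) as [z [Hz E]].
  assert (Derive lnf z <= - c * Rpower s q) by (apply Derive_lnf_le; lra). nra.
Qed.

Lemma lnf_le_power t : 2 * (M + 1) <= t ->
  ln (f t) <= ln (f (M + 1)) - c * Rpower (/ 2) (1 + q) * Rpower t (1 + q).
Proof.
  intros Ht. set (s := t / 2).
  assert (Hs : 0 < s) by (unfold s; lra).
  assert (Hhalf : Rpower s q * (t - s) = Rpower (/ 2) (1 + q) * Rpower t (1 + q)).
  { replace (t - s) with s by (unfold s; field).
    rewrite <- (Rpower_1 s) at 2 by exact Hs.
    rewrite <- Rpower_plus, Rpower_mult_distr by lra.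
    unfold s. f_equal; [field | ring]. }
  assert (Hfar := lnf_decrease (M + 1) s ltac:(lra) ltac:(unfold s; lra)).
  assert (Hnear := lnf_decrease s t ltac:(unfold s; lra) ltac:(unfold s; lra)).
  assert (0 <= c * Rpower (M + 1) q * (s - (M + 1))).
  { apply Rmult_le_pos; [| unfold s; lra].
    apply Rmult_le_pos; [lra | left; apply exp_pos]. }
  rewrite Rmult_assoc, Hhalf in Hnear. lra.
Qed.

Lemma f_le_exp_decay t x : 2 * (M + 1) <= t -> t <= x ->
  f x <= f (M + 1) * exp (- c * Rpower (/ 2) (1 + q) * Rpower t (1 + q)) * exp (- c * (x - t)).
Proof.
  intros Ht Hx.
  assert (Htq : 1 <= Rpower t q) by (rewrite <- (Rpower_O t) by lra; apply Rle_Rpower; lra).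
  assert (c * (x - t) <= c * Rpower t q * (x - t)).
  { assert (0 <= (Rpower t q - 1) * (x - t)) by (apply Rmult_le_pos; lra). nra. }
  pose proof (lnf_decrease t x ltac:(lra) Hx). pose proof (lnf_le_power t Ht).
  rewrite <- (exp_ln (f x)), <- (exp_ln (f (M + 1))), <- !exp_plus by apply f_pos.
  apply exp_le_compat. lra.
Qed.

Lemma RInt_right_decay : exists K T, 0 < K /\ forall t b, T <= t -> t <= b ->
  RInt f t b <= K * exp (- c * Rpower (/ 2) (1 + q) * Rpower t (1 + q)).
Proof.
  exists (f (M + 1) / c), (2 * (M + 1)). split; [apply Rdiv_lt_0_compat; auto |].
  intros t b Ht Htb.
  replace (f (M + 1) / c * exp (- c * Rpower (/ 2) (1 + q) * Rpower t (1 + q)))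
    with (f (M + 1) * exp (- c * Rpower (/ 2) (1 + q) * Rpower t (1 + q)) / c) by (field; lra).
  apply RInt_le_exp_decay; auto.
  - apply continuous_of_ex_derive_ln; auto.
  - apply Rmult_le_pos; left; [apply f_pos | apply exp_pos].
  - intros x Hx. apply f_le_exp_decay; auto.
Qed.

End LogDerivativeDecay.

Lemma Derive_ln_comp_opp (f : R -> R) (Hd : forall x, ex_derive (fun y => ln (f y)) x) x :
  Derive (fun y => ln (f (- y))) x = - Derive (fun y => ln (f y)) (- x).
Proof.
  rewrite (Derive_comp (fun y => ln (f y)) (fun y => - y)); [| apply Hd | auto_derive; auto].
  replace (Derive (fun y => - y) x) with (-1)
    by (symmetry; apply is_derive_unique; auto_derive; auto).
  ring.
Qed.

Lemma RInt_left_decay (f : R -> R) (B q c M : R) :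
  (forall x, 0 < f x) ->
  (forall x, ex_derive (fun y => ln (f y)) x) ->
  (forall x, continuous (Derive (fun y => ln (f y))) x) ->
  (forall a b, a <= b -> RInt f a b <= B) ->
  0 <= q -> 0 < c -> 1 <= M ->
  (forall x, x < - M -> c * Rpower (- x) q <= Rabs (Derive (fun y => ln (f y)) x)) ->
  exists K T, 0 < K /\ forall t a, T <= t -> a <= - t ->
    RInt f a (- t) <= K * exp (- c * Rpower (/ 2) (1 + q) * Rpower t (1 + q)).
Proof.
  intros Hpos Hd Hdc Hb Hq Hc HM Hge.
  assert (Hfc := continuous_of_ex_derive_ln f Hpos Hd).
  destruct (RInt_right_decay (fun y => f (- y))) with (B := B) (q := q) (c := c) (M := M)
    as [K [T [HK Hdecay]]]; auto.
  - intros x. apply (ex_derive_comp (fun y => ln (f y)) (fun y => - y));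
      [apply Hd | auto_derive; auto].
  - intros x. apply continuous_ext with (fun x => opp (Derive (fun y => ln (f y)) (- x))).
    { intros y. rewrite Derive_ln_comp_opp by exact Hd. reflexivity. }
    apply (continuous_opp (V := R_NormedModule) (fun x => Derive (fun y => ln (f y)) (- x))).
    apply (continuous_comp (fun y => - y) (Derive (fun y => ln (f y)))); [| apply Hdc].
    apply ex_derive_continuous_R. auto_derive. auto.
  - intros a b Hab. rewrite RInt_comp_opp_cont by exact Hfc. apply Hb. lra.
  - intros x Hx. rewrite Derive_ln_comp_opp, Rabs_Ropp by exact Hd.
    rewrite <- (Ropp_involutive x) at 1. apply Hge. lra.
  - exists K, T. split; [exact HK |]. intros t a Ht Ha.
    rewrite <- (Ropp_involutive a), <- RInt_comp_opp_cont by exact Hfc.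
    apply Hdecay; lra.
Qed.

Lemma abs_tail_prob_decay (pi : R -> R) (q c M : R) :
  (forall x, 0 < pi x) ->
  is_prob_density pi ->
  (forall x, ex_derive (fun y => ln (pi y)) x) ->
  (forall x, continuous (Derive (fun y => ln (pi y))) x) ->
  0 <= q -> 0 < c ->
  (forall x, M < Rabs x -> c * Rpower (Rabs x) q <= Rabs (Derive (fun y => ln (pi y)) x)) ->
  exists K T, 0 < K /\ forall t, T <= t ->
    abs_tail_prob pi t <= K * exp (- c * Rpower (/ 2) (1 + q) * Rpower t (1 + q)).
Proof.
  intros Hpos Hdens Hd Hdc Hq Hc Hge.
  assert (Hfc := continuous_of_ex_derive_ln pi Hpos Hd).
  assert (Hb : forall a b, a <= b -> RInt pi a b <= 1).
  { intros a b. apply (RInt_le_total pi Hfc 1 Hdens). intros x; left; apply Hpos. }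
  set (M1 := Rmax M 1).
  assert (HM1 : M <= M1 /\ 1 <= M1) by (split; [apply Rmax_l | apply Rmax_r]).
  destruct (RInt_right_decay pi Hpos Hd Hdc 1 Hb q c M1) as [K1 [T1 [HK1 Hright]]]; try lra.
  { intros x Hx. rewrite <- (Rabs_right x) at 1 by lra. apply Hge. rewrite Rabs_right; lra. }
  destruct (RInt_left_decay pi 1 q c M1) as [K2 [T2 [HK2 Hleft]]]; try lra; auto.
  { intros x Hx. rewrite <- Rabs_left by lra. apply Hge. rewrite Rabs_left; lra. }
  exists (K1 + K2), (Rmax T1 T2). split; [lra |]. intros t Ht.
  pose proof (Rmax_l T1 T2). pose proof (Rmax_r T1 T2).
  unfold abs_tail_prob. rewrite Rmult_plus_distr_r. apply Rplus_le_compat.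
  - apply (RInt_gen_right_le pi Hfc 1 Hdens). intros b Hb'. apply Hright; lra.
  - apply (RInt_gen_left_le pi Hfc 1 Hdens). intros a Ha. apply Hleft; lra.
Qed.

Lemma mul_exp_neg_le a h : 0 < a -> h * exp (- a * h) <= / a.
Proof.
  intros Ha. pose proof (exp_ineq1_le (a * h)) as Hexp. pose proof (exp_pos (a * h)).
  replace (- a * h) with (- (a * h)) by ring. rewrite exp_Ropp.
  apply (Rmult_le_reg_l (a * exp (a * h))); [apply Rmult_lt_0_compat; auto |].
  replace (a * exp (a * h) * (h * / exp (a * h))) with (a * h) by (field; lra).
  replace (a * exp (a * h) * / a) with (exp (a * h)) by (field; lra).
  lra.
Qed.

Lemma tail_weight_le a q k h : 0 < a -> 0 <= q <= 1 -> 0 <= k -> 1 <= h ->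
  exp (- a * Rpower (k + h) (1 + q)) * exp (a / 2 * Rpower h (1 + q) + q * ln h) <= 2 / a.
Proof.
  intros Ha Hq Hk Hh.
  assert (Hpow : h <= Rpower h (1 + q)).
  { rewrite <- (Rpower_1 h) at 1 by lra. apply Rle_Rpower; lra. }
  assert (Hmono : Rpower h (1 + q) <= Rpower (k + h) (1 + q)) by (apply Rle_Rpower_l; lra).
  assert (Hln : 0 <= ln h) by (rewrite <- ln_1; apply ln_le; lra).
  rewrite <- exp_plus.
  apply Rle_trans with (h * exp (- (a / 2) * h)).
  - replace (h * exp (- (a / 2) * h)) with (exp (ln h + - (a / 2) * h))
      by (rewrite exp_plus, exp_ln by lra; reflexivity).
    apply exp_le_compat. nra.
  - replace (2 / a) with (/ (a / 2)) by (field; lra). apply mul_exp_neg_le. lra.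
Qed.

Theorem lemma6 (pi1 : R -> R) (q k : R) :
  (forall x, 0 < pi1 x) ->
  is_prob_density pi1 ->
  (* log pi1 is C^1 on R *)
  (forall x, ex_derive (fun y => ln (pi1 y)) x) ->
  (forall x, continuous (Derive (fun y => ln (pi1 y))) x) ->
  0 <= q < 1 ->
  (* |(log pi1)'(x)| = Theta(|x|^q) as |x| -> oo *)
  (exists c C M : R, 0 < c /\ 0 < C /\
     forall x, M < Rabs x ->
       c * Rpower (Rabs x) q <= Rabs (Derive (fun y => ln (pi1 y)) x) <=
       C * Rpower (Rabs x) q) ->
  0 <= k ->
  exists gamma : R, 0 < gamma /\
    exists B H : R, forall h, H < h ->
      abs_tail_prob pi1 (k + h) * exp (gamma * Rpower h (1 + q) + q * ln h) <= B.
Proof.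
  intros Hpos Hdens Hd Hdc Hq [c [C [M [Hc [_ HM]]]]] Hk.
  destruct (abs_tail_prob_decay pi1 q c M) as [K [T [HK Htail]]]; auto; try lra.
  { intros x Hx. apply HM, Hx. }
  set (a := c * Rpower (/ 2) (1 + q)).
  assert (Ha : 0 < a) by (apply Rmult_lt_0_compat; [lra | apply exp_pos]).
  exists (a / 2). split; [lra |].
  exists (K * (2 / a)), (Rmax T 1). intros h Hh.
  pose proof (Rmax_l T 1). pose proof (Rmax_r T 1).
  apply Rle_trans with
    (K * exp (- a * Rpower (k + h) (1 + q)) * exp (a / 2 * Rpower h (1 + q) + q * ln h)).
  - apply Rmult_le_compat_r; [left; apply exp_pos |].
    replace (- a) with (- c * Rpower (/ 2) (1 + q)) by (unfold a; ring). apply Htail. lra.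
  - rewrite Rmult_assoc. apply Rmult_le_compat_l; [lra |]. apply tail_weight_le; lra.
Qed.
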